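(* Assume $\mu_n\to0$, $n^{1/2}\mu_n\to\infty$, and $\theta_n/\mu_n\to\zeta\in\mathbb R\cup\{-\infty,\infty\}$. 1. If $|\zeta|<1$, then $G_{A,n,\theta_n}$ converges weakly to the cdf $\mathbf 1(\cdot\ge-\zeta)$. 2. If $1\le|\zeta|<\infty$, then $G_{A,n,\theta_n}$ converges weakly to the cdf $\mathbf 1(\cdot\ge-1/\zeta)$. 3. If $|\zeta|=\infty$, then $G_{A,n,\theta_n}$ converges weakly to the cdf $\mathbf 1(\cdot\ge0)$.
   Context: Gaussian location model: for each sample size $n$, $y_1,\dots,y_n$ are i.i.d. $N(\theta,1)$ with $\theta\in\mathbb R$ unknown; $\bar y$ is their mean. $P_{n,\theta}$ denotes the probability governing a sample of size $n$ when $\theta$ is the true parameter. Given a nonrandom tuning parameter $\mu_n>0$, the adaptive LASSO estimator is $\hat\theta_A=0$ if $|\bar y|\le\mu_n$ and $\hat\theta_A=\bar y-\mu_n^2/\bar y$ if $|\bar y|>\mu_n$. $G_{A,n,\theta}$ denotes the cdf of $\mu_n^{-1}(\hat\theta_A-\theta)$ under $P_{n,\theta}$. *)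

From Stdlib Require Import Reals Lra Classical ClassicalEpsilon.
Open Scope R_scope.

(* Value of a Riemann integral (arbitrary if f is not Riemann integrable on [a,b]). *)
Definition RInt (f : R -> R) (a b : R) : R :=
  epsilon (inhabits 0) (fun I => exists pr : Riemann_integrable f a b, RiemannInt pr = I).

(* Improper integral over R, as the limit of integrals over [-M, M], M -> oo
   (arbitrary if the limit does not exist). *)
Definition RInt_R (f : R -> R) : R :=
  epsilon (inhabits 0) (fun L => Un_cv (fun M : nat => RInt f (- INR M) (INR M)) L).

(* Density of N(m, 1/n), the law of the sample mean ybar of n iid N(theta,1). *)
Definition ybar_density (n : nat) (theta : R) (y : R) : R :=
  sqrt (INR n / (2 * PI)) * exp (- (INR n) * (y - theta) ^ 2 / 2).

(* Adaptive LASSO estimator as a function of ybar. *)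
Definition thetaA (mu ybar : R) : R :=
  if Rle_dec (Rabs ybar) mu then 0 else ybar - mu ^ 2 / ybar.

(* G_{A,n,theta}(x) = P_{n,theta}( mu^{-1} (thetaA - theta) <= x ). *)
Definition G_A (mu : R) (n : nat) (theta : R) (x : R) : R :=
  RInt_R (fun y => (if Rle_dec ((thetaA mu y - theta) / mu) x then 1 else 0)
                   * ybar_density n theta y).

Definition step (c : R) (x : R) : R := if Rle_dec c x then 1 else 0.

Definition weak_conv (G : nat -> R -> R) (F : R -> R) : Prop :=
  forall x, continuity_pt F x -> Un_cv (fun n => G n x) (F x).

Inductive ereal := Fin (r : R) | PInf | MInf.

Definition cv_ereal (u : nat -> R) (z : ereal) : Prop :=
  match z with
  | Fin r => Un_cv u r
  | PInf => cv_infty u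
  | MInf => cv_infty (fun n => - u n)
  end.

From Stdlib Require Import Reals Lra Lia ClassicalEpsilon FunctionalExtensionality.
Open Scope R_scope.

(** Put [w_n = theta_n / mu_n].  For a sample mean [y], the rescaled error
    [(thetaA mu_n y - theta_n) / mu_n] equals [rescaled w_n t] with
    [t = (y - theta_n) / mu_n] ([rescaled_spec]).  As [sqrt n * mu_n -> oo],
    [t] tends to [0] in probability: the law [N(theta_n, 1/n)] of [y] gives
    mass at least [1 - 5 / (n b^2)] to [[theta_n - b, theta_n + b]], and we
    take [b = ep * mu_n].  Hence [G_A] converges to [step c] at every
    [x <> c] as soon as [rescaled w_n t -> c] uniformly for small [t]
    ([weak_conv_of_concentrates]); the limit [c] is [-zeta], [-1/zeta] or
    [0] in the three regimes of the theorem ([concentrates_inside],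
    [concentrates_boundary], [concentrates_infinite]). *)

(** Thin wrappers around the Stdlib differentiation rules, stated for
    functions of the form [fun y => ...] so that [eapply] can match them. *)

Lemma D_eq f x l l' : derivable_pt_lim f x l -> l = l' -> derivable_pt_lim f x l'.
Proof. now intros H ->. Qed.

Lemma D_id x : derivable_pt_lim (fun y => y) x 1.
Proof. apply derivable_pt_lim_id. Qed.

Lemma D_const c x : derivable_pt_lim (fun _ => c) x 0.
Proof. apply (derivable_pt_lim_const c). Qed.

Lemma D_add f g x l1 l2 : derivable_pt_lim f x l1 -> derivable_pt_lim g x l2 ->
  derivable_pt_lim (fun y => f y + g y) x (l1 + l2).
Proof. intros; now apply (derivable_pt_lim_plus f g). Qed.

Lemma D_sub f g x l1 l2 : derivable_pt_lim f x l1 -> derivable_pt_lim g x l2 ->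
  derivable_pt_lim (fun y => f y - g y) x (l1 - l2).
Proof. intros; now apply (derivable_pt_lim_minus f g). Qed.

Lemma D_mul f g x l1 l2 : derivable_pt_lim f x l1 -> derivable_pt_lim g x l2 ->
  derivable_pt_lim (fun y => f y * g y) x (l1 * g x + f x * l2).
Proof. intros; now apply (derivable_pt_lim_mult f g). Qed.

Lemma D_opp f x l : derivable_pt_lim f x l -> derivable_pt_lim (fun y => - f y) x (- l).
Proof. intros; now apply (derivable_pt_lim_opp f). Qed.

Lemma D_divc f x l c : derivable_pt_lim f x l ->
  derivable_pt_lim (fun y => f y / c) x (l / c).
Proof. apply derivable_pt_lim_div_scal. Qed.

Lemma D_pow2 f x l : derivable_pt_lim f x l ->
  derivable_pt_lim (fun y => f y ^ 2) x (2 * f x * l).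
Proof.
  intros H. replace (fun y => f y ^ 2) with (fun y => f y * f y)
    by (apply functional_extensionality; intros; ring).
  eapply D_eq; [apply D_mul; exact H | ring].
Qed.

Lemma D_comp f g x l1 l2 : derivable_pt_lim f x l1 -> derivable_pt_lim g (f x) l2 ->
  derivable_pt_lim (fun y => g (f y)) x (l2 * l1).
Proof. intros; apply (derivable_pt_lim_comp f g); auto. Qed.

Lemma D_exp f x l : derivable_pt_lim f x l ->
  derivable_pt_lim (fun y => exp (f y)) x (exp (f x) * l).
Proof. intros H. apply (D_comp f exp); auto using derivable_pt_lim_exp. Qed.

Ltac derive_rules := repeat first [ apply D_const | apply D_id | eapply D_divc
  | eapply D_add | eapply D_sub | eapply D_mul | eapply D_opp | eapply D_exp
  | eapply D_pow2 ].

Lemma D_local f g x l d : 0 < d -> (forall y, Rabs (y - x) < d -> f y = g y) ->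
  derivable_pt_lim f x l -> derivable_pt_lim g x l.
Proof.
  intros Hd Heq H eps Heps. destruct (H eps Heps) as [del Hdel].
  assert (Hm : 0 < Rmin del d) by (apply Rmin_pos; [apply cond_pos | lra]).
  exists (mkposreal _ Hm); simpl. intros h Hh0 Hh.
  assert (Hhd : Rabs h < d) by (eapply Rlt_le_trans; [exact Hh | apply Rmin_r]).
  rewrite <- !Heq.
  - apply Hdel; auto. eapply Rlt_le_trans; [exact Hh | apply Rmin_l].
  - rewrite Rminus_diag, Rabs_R0; lra.
  - now replace (x + h - x) with h by ring.
Qed.

Lemma zero_derivative_const D : (forall x, derivable_pt_lim D x 0) -> forall a b, D a = D b.
Proof.
  intros H a b. destruct (Rtotal_order a b) as [Hab | [-> | Hab]]; auto.
  - destruct (MVT_cor2 D (fun _ => 0) a b Hab (fun c _ => H c)) as [c [Hc _]]. lra.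
  - destruct (MVT_cor2 D (fun _ => 0) b a Hab (fun c _ => H c)) as [c [Hc _]]. lra.
Qed.

Lemma mean_value_ineq f f' a b B :
  (forall s, Rmin a b <= s <= Rmax a b -> derivable_pt_lim f s (f' s)) ->
  (forall s, Rmin a b <= s <= Rmax a b -> Rabs (f' s) <= B) ->
  Rabs (f b - f a) <= B * Rabs (b - a).
Proof.
  intros H HB. destruct (Rtotal_order a b) as [Hab | [<- | Hab]].
  - rewrite Rmin_left, Rmax_right in * by lra.
    destruct (MVT_cor2 f f' a b Hab H) as [c [-> Hc]]. rewrite Rabs_mult.
    apply Rmult_le_compat_r; [apply Rabs_pos | apply HB; lra].
  - rewrite !Rminus_diag, Rabs_R0.
    assert (0 <= B).
    { apply Rle_trans with (Rabs (f' a)); [apply Rabs_pos | apply HB].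
      rewrite Rmin_left, Rmax_left; lra. }
    lra.
  - rewrite Rmin_right, Rmax_left in * by lra.
    destruct (MVT_cor2 f f' b a Hab H) as [c [Hc Hc2]].
    rewrite <- Rabs_Ropp, <- (Rabs_Ropp (b - a)).
    replace (- (f b - f a)) with (f a - f b) by ring.
    replace (- (b - a)) with (a - b) by ring.
    rewrite Hc, Rabs_mult. apply Rmult_le_compat_r; [apply Rabs_pos | apply HB; lra].
Qed.

Lemma RInt_eq f a b (pr : Riemann_integrable f a b) : RInt f a b = RiemannInt pr.
Proof.
  unfold RInt.
  destruct (epsilon_spec (inhabits 0)
    (fun I => exists pr : Riemann_integrable f a b, RiemannInt pr = I)) as [pr' <-].
  - now exists (RiemannInt pr), pr.
  - apply RiemannInt_P5.
Qed.

Lemma continuity_integrable f a b : continuity f -> Riemann_integrable f a b.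
Proof.
  intros Hf. destruct (Rle_dec a b).
  - now apply continuity_implies_RiemannInt.
  - apply RiemannInt_P1, continuity_implies_RiemannInt; auto. lra.
Qed.

Lemma RInt_chasles_pr f a b c : Riemann_integrable f a b -> Riemann_integrable f b c ->
  RInt f a b + RInt f b c = RInt f a c.
Proof.
  intros p1 p2. rewrite (RInt_eq f a b p1), (RInt_eq f b c p2),
    (RInt_eq f a c (RiemannInt_P24 p1 p2)). apply RiemannInt_P26.
Qed.

Lemma RInt_chasles f a b c : continuity f -> RInt f a b + RInt f b c = RInt f a c.
Proof. intros; apply RInt_chasles_pr; now apply continuity_integrable. Qed.

Lemma RInt_split3 (k : R -> R) a p q b : (forall u v, Riemann_integrable k u v) ->
  RInt k a b = RInt k a p + RInt k p q + RInt k q b.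
Proof.
  intros Hk. rewrite <- (RInt_chasles_pr k a p b), <- (RInt_chasles_pr k p q b); auto. ring.
Qed.

Lemma RInt_aa f a : RInt f a a = 0.
Proof. rewrite (RInt_eq f a a (RiemannInt_P7 f a)). apply RiemannInt_P9. Qed.

Lemma RInt_lin f g l a b : Riemann_integrable f a b -> Riemann_integrable g a b ->
  RInt (fun x => f x + l * g x) a b = RInt f a b + l * RInt g a b.
Proof.
  intros p1 p2. rewrite (RInt_eq f a b p1), (RInt_eq g a b p2),
    (RInt_eq _ a b (RiemannInt_P10 l p1 p2)). apply RiemannInt_P13.
Qed.

Lemma RInt_const c a b : RInt (fun _ => c) a b = c * (b - a).
Proof.
  change (RInt (fct_cte c) a b = c * (b - a)).
  rewrite (RInt_eq (fct_cte c) a b (RiemannInt_P14 a b c)). apply RiemannInt_P15.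
Qed.

Lemma RInt_scal f l a b : Riemann_integrable f a b ->
  RInt (fun x => l * f x) a b = l * RInt f a b.
Proof.
  intros p.
  replace (fun x => l * f x) with (fun x => (fun _ : R => 0) x + l * f x)
    by (apply functional_extensionality; intros; ring).
  rewrite RInt_lin, RInt_const; [ring | apply RiemannInt_P14 | exact p].
Qed.

Lemma RInt_le f g a b : Riemann_integrable f a b -> Riemann_integrable g a b -> a <= b ->
  (forall x, a < x < b -> f x <= g x) -> RInt f a b <= RInt g a b.
Proof.
  intros p1 p2 Hab H. rewrite (RInt_eq f a b p1), (RInt_eq g a b p2).
  now apply RiemannInt_P19.
Qed.

Lemma RInt_ext f g a b : a <= b -> (forall x, a < x < b -> f x = g x) ->
  Riemann_integrable f a b -> Riemann_integrable g a b -> RInt f a b = RInt g a b.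
Proof.
  intros Hab H p1 p2.
  apply Rle_antisym; apply RInt_le; auto; intros x Hx; rewrite H; auto; lra.
Qed.

Lemma RInt_abs_le f a b : Riemann_integrable f a b -> a <= b ->
  Rabs (RInt f a b) <= RInt (fun x => Rabs (f x)) a b.
Proof.
  intros p Hab. rewrite (RInt_eq f a b p), (RInt_eq _ a b (RiemannInt_P16 p)).
  now apply RiemannInt_P17.
Qed.

Lemma RInt_pos f a b : Riemann_integrable f a b -> a <= b ->
  (forall x, a < x < b -> 0 <= f x) -> 0 <= RInt f a b.
Proof.
  intros p Hab H. replace 0 with (RInt (fun _ => 0) a b) by (rewrite RInt_const; ring).
  apply RInt_le; auto. apply RiemannInt_P14.
Qed.

Lemma RInt_deriv f a t : continuity f -> derivable_pt_lim (fun s => RInt f a s) t (f t).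
Proof.
  intros Hf. set (T := Rabs t + Rabs a + 1).
  assert (HT : - T <= T) by (unfold T; pose proof (Rabs_pos t); pose proof (Rabs_pos a); lra).
  assert (HaT : - T <= a <= T) by (unfold T; split_Rabs; lra).
  set (P := primitive HT (FTC_P1 HT (fun x _ => Hf x))).
  assert (HP : forall s, -T <= s <= T -> RInt f a s = P s - P a).
  { assert (Hin : forall x, -T <= x <= T -> P x = RInt f (-T) x).
    { intros x Hx. unfold P, primitive.
      destruct (Rle_dec (-T) x); [|lra]. destruct (Rle_dec x T); [|lra].
      symmetry; apply RInt_eq. }
    intros s Hs. rewrite !Hin by auto. rewrite <- (RInt_chasles f (-T) a s Hf). ring. }
  apply D_local with (f := fun s => P s - P a) (d := 1); [lra | |].
  - intros y Hy. rewrite HP; auto. unfold T; split_Rabs; lra.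
  - apply D_eq with (f t - 0); [|ring]. apply D_sub; [|apply D_const].
    apply RiemannInt_P28. unfold T; split_Rabs; lra.
Qed.

Lemma FTC f F a b : continuity f -> (forall x, derivable_pt_lim F x (f x)) ->
  RInt f a b = F b - F a.
Proof.
  intros Hf HF.
  assert (E : RInt f a b - F b = RInt f a a - F a).
  { apply (zero_derivative_const (fun s => RInt f a s - F s)). intros x.
    apply D_eq with (f x - f x); [apply D_sub; auto using RInt_deriv | ring]. }
  rewrite RInt_aa in E. lra.
Qed.

Lemma RInt_subst f c d a b : continuity f ->
  RInt (fun x => c * f (c * x + d)) a b = RInt f (c * a + d) (c * b + d).
Proof.
  intros Hf.
  assert (Haff : forall x, derivable_pt_lim (fun x => c * x + d) x c).
  { intros x. apply D_eq with (0 * x + c * 1 + 0); [derive_rules | ring]. }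
  rewrite (FTC _ (fun x => RInt f 0 (c * x + d))).
  - rewrite <- (RInt_chasles f 0 (c * a + d) (c * b + d) Hf). ring.
  - apply (continuity_mult (fun _ => c)); [apply continuity_const; now intros ? ? |].
    apply (continuity_comp (fun x => c * x + d) f); [reg | exact Hf].
  - intros x. apply D_eq with (f (c * x + d) * c); [|ring].
    apply (D_comp (fun x => c * x + d) (fun s => RInt f 0 s)); auto using RInt_deriv.
Qed.

Lemma tangent_remainder phi dphi t0 h C : 0 <= C ->
  (forall s, derivable_pt_lim phi s (dphi s)) ->
  (forall s, Rabs (s - t0) <= Rabs h -> Rabs (dphi s - dphi t0) <= C * Rabs (s - t0)) ->
  Rabs (phi (t0 + h) - phi t0 - h * dphi t0) <= C * Rabs h * Rabs h.
Proof.
  intros HC Hd Hlip.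
  set (psi := fun s => phi s - s * dphi t0).
  replace (phi (t0 + h) - phi t0 - h * dphi t0) with (psi (t0 + h) - psi t0)
    by (unfold psi; ring).
  replace (C * Rabs h * Rabs h) with (C * Rabs h * Rabs (t0 + h - t0))
    by (do 2 f_equal; ring).
  apply mean_value_ineq with (f' := fun s => dphi s - dphi t0).
  - intros s _. apply D_eq with (dphi s - (1 * dphi t0 + s * 0)); [|ring].
    apply D_sub; [apply Hd |]. apply (D_mul (fun y => y) (fun _ => dphi t0));
      [apply D_id | apply D_const].
  - intros s Hs.
    assert (Hst : Rabs (s - t0) <= Rabs h)
      by (unfold Rmin, Rmax in Hs; destruct (Rle_dec t0 (t0 + h)); split_Rabs; lra).
    eapply Rle_trans; [now apply Hlip |]. now apply Rmult_le_compat_l.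
Qed.

Section ParametricIntegral.

Variables (f df : R -> R -> R) (t0 C d : R).
Hypothesis d_pos : 0 < d.
Hypothesis C_nonneg : 0 <= C.
Hypothesis f_cont : forall t, continuity (f t).
Hypothesis df_cont : forall t, continuity (df t).
Hypothesis f_deriv : forall t x, derivable_pt_lim (fun s => f s x) t (df t x).
Hypothesis df_lip : forall t x, Rabs (t - t0) < d -> 0 <= x <= 1 ->
  Rabs (df t x - df t0 x) <= C * Rabs (t - t0).

(** Integrating [tangent_remainder] over [[0,1]]. *)
Lemma RInt_tangent_remainder h : Rabs h < d ->
  Rabs (RInt (f (t0 + h)) 0 1 - RInt (f t0) 0 1 - h * RInt (df t0) 0 1)
  <= C * Rabs h * Rabs h.
Proof.
  intros Hhd.
  set (k := fun x => f (t0 + h) x - f t0 x - h * df t0 x).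
  assert (Hcst : forall c, continuity (fun _ => c))
    by (intros c; apply continuity_const; now intros ? ?).
  assert (Hk_cont : continuity k).
  { unfold k. apply continuity_minus; [apply continuity_minus; auto |].
    apply (continuity_mult (fun _ => h)); auto. }
  replace (RInt (f (t0 + h)) 0 1 - RInt (f t0) 0 1 - h * RInt (df t0) 0 1) with (RInt k 0 1).
  2: { replace k with (fun x => (fun x => f (t0 + h) x + (-1) * f t0 x) x + (- h) * df t0 x)
         by (apply functional_extensionality; intros; unfold k; ring).
       rewrite !RInt_lin; try apply continuity_integrable; auto; [ring |].
       apply continuity_plus; auto. apply (continuity_mult (fun _ => -1)); auto. }
  eapply Rle_trans; [apply RInt_abs_le; [now apply continuity_integrable | lra] |].
  replace (C * Rabs h * Rabs h) with (RInt (fun _ => C * Rabs h * Rabs h) 0 1)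
    by (rewrite RInt_const; ring).
  apply RInt_le; [| apply RiemannInt_P14 | lra |].
  - apply continuity_integrable.
    now apply continuity_comp with (f2 := Rabs); [| apply Rcontinuity_abs].
  - intros x Hx.
    apply (tangent_remainder (fun s => f s x) (fun s => df s x)); auto.
    intros s Hs. apply df_lip; lra.
Qed.

Lemma RInt_param_deriv :
  derivable_pt_lim (fun t => RInt (f t) 0 1) t0 (RInt (df t0) 0 1).
Proof.
  intros eps Heps.
  assert (Hm : 0 < Rmin d (eps / (C + 1)))
    by (apply Rmin_pos; [lra | apply Rdiv_lt_0_compat; lra]).
  exists (mkposreal _ Hm); simpl. intros h Hh0 Hh.
  assert (Hhd : Rabs h < d) by (eapply Rlt_le_trans; [exact Hh | apply Rmin_l]).
  assert (Hhe : Rabs h < eps / (C + 1)) by (eapply Rlt_le_trans; [exact Hh | apply Rmin_r]).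
  assert (Hah : 0 < Rabs h) by now apply Rabs_pos_lt.
  pose proof (RInt_tangent_remainder h Hhd) as Hrem.
  replace ((RInt (f (t0 + h)) 0 1 - RInt (f t0) 0 1) / h - RInt (df t0) 0 1)
    with ((RInt (f (t0 + h)) 0 1 - RInt (f t0) 0 1 - h * RInt (df t0) 0 1) / h)
    by (field; auto).
  unfold Rdiv. rewrite Rabs_mult, Rabs_inv.
  apply Rle_lt_trans with (C * Rabs h).
  { apply Rmult_le_reg_r with (Rabs h); auto. rewrite Rmult_assoc, Rinv_l by lra. lra. }
  apply Rle_lt_trans with (C * (eps / (C + 1))); [apply Rmult_le_compat_l; lra |].
  apply Rmult_lt_reg_r with (C + 1); [lra |]. field_simplify; nra.
Qed.

End ParametricIntegral.

(** * The Gaussian integral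

    With [gauss s = exp (-s^2/2)] and [Phi t = RInt gauss 0 t], the function
    [feynman t = RInt_0^1 exp(-t^2(1+x^2)/2)/(1+x^2) dx + Phi t ^ 2 / 2]
    has zero derivative, so it equals its value [atan 1 = PI/4] at [0].
    Since the first summand lies in [[0, exp(-t^2/2)]], this pins down
    [Phi t ^ 2] up to [2 exp(-t^2/2)], i.e. [RInt gauss (-K) K ~ sqrt (2 PI)]. *)

Definition gauss (s : R) : R := exp (- s ^ 2 / 2).
Definition feyn (t x : R) : R := exp (- (t ^ 2 * (1 + x ^ 2)) / 2) / (1 + x ^ 2).
Definition feyn_dt (t x : R) : R := - t * exp (- (t ^ 2 * (1 + x ^ 2)) / 2).
Definition gauss_prim (t : R) : R := RInt gauss 0 t.
Definition feynman (t : R) : R := RInt (feyn t) 0 1 + gauss_prim t ^ 2 / 2.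

Lemma gauss_cont : continuity gauss.
Proof. unfold gauss; reg. Qed.

Lemma one_plus_sq x : 1 <= 1 + x ^ 2.
Proof. nra. Qed.

Lemma feyn_cont t : continuity (feyn t).
Proof. unfold feyn. reg. intros x; pose proof (one_plus_sq x); lra. Qed.

Lemma feyn_dt_cont t : continuity (feyn_dt t).
Proof. unfold feyn_dt; reg. Qed.

Lemma feyn_deriv t x : derivable_pt_lim (fun s => feyn s x) t (feyn_dt t x).
Proof.
  unfold feyn, feyn_dt. eapply D_eq; [derive_rules |]. simpl.
  pose proof (one_plus_sq x). simpl in *. field. lra.
Qed.

Lemma feyn_dt_deriv t x : derivable_pt_lim (fun s => feyn_dt s x) t
   ((t ^ 2 * (1 + x ^ 2) - 1) * exp (- (t ^ 2 * (1 + x ^ 2)) / 2)).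
Proof. unfold feyn_dt. eapply D_eq; [derive_rules |]. simpl. field. Qed.

Lemma exp_mono a b : a <= b -> exp a <= exp b.
Proof.
  intros [H | ->]; [left; now apply exp_increasing | lra].
Qed.

Lemma exp_le_1 a : a <= 0 -> exp a <= 1.
Proof. intros H. rewrite <- exp_0. now apply exp_mono. Qed.

Lemma feyn_dt_lip t0 t x : Rabs (t - t0) < 1 -> 0 <= x <= 1 ->
  Rabs (feyn_dt t x - feyn_dt t0 x) <= (2 * (Rabs t0 + 1) ^ 2 + 1) * Rabs (t - t0).
Proof.
  intros Ht Hx. apply mean_value_ineq with (f := fun s => feyn_dt s x)
    (f' := fun s => (s ^ 2 * (1 + x ^ 2) - 1) * exp (- (s ^ 2 * (1 + x ^ 2)) / 2)).
  - intros s _. apply feyn_dt_deriv.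
  - intros s Hs.
    assert (Hsa : Rabs s <= Rabs t0 + 1)
      by (unfold Rmin, Rmax in Hs; destruct (Rle_dec t0 t); split_Rabs; lra).
    assert (Hs2 : s ^ 2 <= (Rabs t0 + 1) ^ 2).
    { rewrite <- (pow2_abs s). apply pow_incr. split; [apply Rabs_pos | exact Hsa]. }
    assert (0 <= s ^ 2) by nra. assert (0 <= x ^ 2 <= 1) by nra.
    assert (He : 0 < exp (- (s ^ 2 * (1 + x ^ 2)) / 2) <= 1)
      by (split; [apply exp_pos | apply exp_le_1; nra]).
    rewrite Rabs_mult, (Rabs_pos_eq (exp _)) by lra.
    assert (Rabs (s ^ 2 * (1 + x ^ 2) - 1) <= 2 * (Rabs t0 + 1) ^ 2 + 1)
      by (apply Rabs_le; split; nra).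
    pose proof (Rabs_pos (s ^ 2 * (1 + x ^ 2) - 1)). nra.
Qed.

(** The derivative of the parametric integral cancels that of [Phi t ^ 2 / 2]. *)
Lemma feynman_deriv t : derivable_pt_lim feynman t 0.
Proof.
  unfold feynman.
  apply D_eq with (RInt (feyn_dt t) 0 1 + (2 * gauss_prim t * gauss t) / 2).
  - apply D_add.
    + apply RInt_param_deriv with (C := 2 * (Rabs t + 1) ^ 2 + 1) (d := 1);
        auto using feyn_cont, feyn_dt_cont, feyn_deriv, feyn_dt_lip; [lra |].
      pose proof (Rabs_pos t); nra.
    + apply D_divc, (D_pow2 gauss_prim), RInt_deriv, gauss_cont.
  - assert (Hdf : feyn_dt t = fun x => (- gauss t) * (t * gauss (t * x + 0))).
    { apply functional_extensionality; intros x. unfold feyn_dt, gauss.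
      replace (- (t ^ 2 * (1 + x ^ 2)) / 2) with (- t ^ 2 / 2 + - (t * x + 0) ^ 2 / 2)
        by (unfold Rdiv; ring).
      rewrite exp_plus. ring. }
    rewrite Hdf, RInt_scal, RInt_subst by (auto using gauss_cont;
      apply continuity_integrable; unfold gauss; reg).
    replace (t * 0 + 0) with 0 by ring. replace (t * 1 + 0) with t by ring.
    unfold gauss_prim. field.
Qed.

Lemma feynman_0 : feynman 0 = PI / 4.
Proof.
  unfold feynman, gauss_prim. rewrite RInt_aa.
  replace (feyn 0) with (fun x => / (1 + x ^ 2)).
  - rewrite (FTC _ atan), atan_1, atan_0; [field | |].
    + reg; intros x; pose proof (one_plus_sq x); lra.
    + intros x; apply derivable_pt_lim_atan.
  - apply functional_extensionality; intros x. unfold feyn.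
    replace (- (0 ^ 2 * (1 + x ^ 2)) / 2) with 0 by (unfold Rdiv; ring).
    rewrite exp_0. pose proof (one_plus_sq x). field. lra.
Qed.

Lemma feynman_const t : feynman t = PI / 4.
Proof. rewrite <- feynman_0. apply zero_derivative_const, feynman_deriv. Qed.

Lemma feyn_integral_bounds t : 0 <= RInt (feyn t) 0 1 <= exp (- t ^ 2 / 2).
Proof.
  split.
  - apply RInt_pos; [apply continuity_integrable, feyn_cont | lra |].
    intros x _. unfold feyn. pose proof (one_plus_sq x).
    apply Rlt_le, Rdiv_lt_0_compat; [apply exp_pos | lra].
  - replace (exp (- t ^ 2 / 2)) with (RInt (fun _ => exp (- t ^ 2 / 2)) 0 1)
      by (rewrite RInt_const; ring).
    apply RInt_le; [apply continuity_integrable, feyn_cont | apply RiemannInt_P14 | lra |].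
    intros x Hx. unfold feyn. pose proof (one_plus_sq x).
    assert (exp (- (t ^ 2 * (1 + x ^ 2)) / 2) <= exp (- t ^ 2 / 2)).
    { apply exp_mono. assert (0 <= t ^ 2 * x ^ 2) by nra. lra. }
    pose proof (exp_pos (- (t ^ 2 * (1 + x ^ 2)) / 2)).
    apply Rmult_le_reg_r with (1 + x ^ 2); [lra |].
    unfold Rdiv. rewrite Rmult_assoc, Rinv_l by lra. nra.
Qed.

Lemma gauss_prim_sq t : gauss_prim t ^ 2 = PI / 2 - 2 * RInt (feyn t) 0 1.
Proof. pose proof (feynman_const t). unfold feynman in *. lra. Qed.

Lemma gauss_prim_nonneg K : 0 <= K -> 0 <= gauss_prim K.
Proof.
  intros HK. apply RInt_pos; auto using continuity_integrable, gauss_cont.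
  intros; left; apply exp_pos.
Qed.

Lemma gauss_sym K : RInt gauss (-K) K = 2 * gauss_prim K.
Proof.
  pose proof (RInt_subst gauss (-1) 0 0 K gauss_cont) as H.
  replace (fun x => -1 * gauss (-1 * x + 0)) with (fun x => -1 * gauss x) in H
    by (apply functional_extensionality; intros x; unfold gauss; do 3 f_equal; ring).
  rewrite RInt_scal in H by apply continuity_integrable, gauss_cont.
  replace (-1 * 0 + 0) with 0 in H by ring. replace (-1 * K + 0) with (-K) in H by ring.
  pose proof (RInt_chasles gauss (-K) 0 (-K) gauss_cont). rewrite RInt_aa in *.
  pose proof (RInt_chasles gauss (-K) 0 K gauss_cont). unfold gauss_prim. lra.
Qed.

Lemma PI_ge : 7 / 4 <= PI.
Proof. unfold PI. destruct pi2_int; lra. Qed.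

Lemma gauss_upper K : 0 <= K -> RInt gauss (-K) K <= sqrt (2 * PI).
Proof.
  intros HK. rewrite gauss_sym. pose proof (gauss_prim_sq K).
  pose proof (feyn_integral_bounds K). pose proof (gauss_prim_nonneg K HK).
  rewrite <- (sqrt_pow2 (2 * gauss_prim K)) by lra. apply sqrt_le_1_alt. nra.
Qed.

Lemma exp_tail K : 0 < K -> exp (- K ^ 2 / 2) * K ^ 2 <= 2.
Proof.
  intros HK. pose proof (exp_ineq1_le (K ^ 2 / 2)).
  assert (exp (- K ^ 2 / 2) * exp (K ^ 2 / 2) = 1).
  { rewrite <- exp_plus. replace (- K ^ 2 / 2 + K ^ 2 / 2) with 0 by field. apply exp_0. }
  pose proof (exp_pos (- K ^ 2 / 2)). nra.
Qed.

Lemma gauss_lower K : 0 < K -> sqrt (2 * PI) * (1 - 5 / K ^ 2) <= RInt gauss (-K) K.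
Proof.
  intros HK. pose proof (gauss_upper K (Rlt_le _ _ HK)) as HU.
  rewrite gauss_sym in *. pose proof (gauss_prim_sq K). pose proof (feyn_integral_bounds K).
  pose proof (gauss_prim_nonneg K (Rlt_le _ _ HK)). pose proof (exp_tail K HK). pose proof PI_ge.
  set (S := sqrt (2 * PI)) in *. assert (HS2 : S * S = 2 * PI) by (apply sqrt_sqrt; lra).
  assert (HS : 0 < S) by (apply sqrt_lt_R0; lra).
  set (X := 2 * gauss_prim K) in *. set (e := exp (- K ^ 2 / 2)) in *.
  assert (HK2 : 0 < K ^ 2) by (apply pow_lt; lra).
  assert (S - 8 * e / S <= X).
  { replace (S - 8 * e / S) with ((S * S - 8 * e) / S) by (field; lra).
    apply Rmult_le_reg_r with S; auto. unfold Rdiv.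
    rewrite Rmult_assoc, Rinv_l, Rmult_1_r by lra. unfold X in *. nra. }
  assert (8 * e / S <= S * (5 / K ^ 2)).
  { unfold Rdiv. apply Rmult_le_reg_r with (S * K ^ 2); [nra |].
    replace (8 * e * / S * (S * K ^ 2)) with (8 * (e * K ^ 2)) by (field; lra).
    replace (S * (5 * / K ^ 2) * (S * K ^ 2)) with (5 * (S * S)) by (field; lra). nra. }
  nra.
Qed.

(** * Mass of the law of [ybar] near its centre

    The density of [N(th, 1/n)] is a rescaled [gauss]; hence its mass on
    any interval is at most [1], and on [[th - b, th + b]] at least
    [1 - 5 / (n b^2)]. *)

Lemma density_as_gauss n th : ybar_density n th =
  fun y => / sqrt (2 * PI) * (sqrt (INR n) * gauss (sqrt (INR n) * y + - sqrt (INR n) * th)).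
Proof.
  apply functional_extensionality; intros y. unfold ybar_density, gauss.
  pose proof PI_ge. pose proof (pos_INR n).
  rewrite sqrt_div by lra.
  replace (sqrt (INR n) * y + - sqrt (INR n) * th) with (sqrt (INR n) * (y - th)) by ring.
  rewrite Rpow_mult_distr, pow2_sqrt by lra.
  assert (0 < sqrt (2 * PI)) by (apply sqrt_lt_R0; lra).
  replace (- (INR n * (y - th) ^ 2) / 2) with (- INR n * (y - th) ^ 2 / 2)
    by (unfold Rdiv; ring).
  field. lra.
Qed.

Lemma density_cont n th : continuity (ybar_density n th).
Proof. unfold ybar_density. reg. Qed.

Lemma density_nonneg n th y : 0 <= ybar_density n th y.
Proof. unfold ybar_density. apply Rmult_le_pos; [apply sqrt_pos | left; apply exp_pos]. Qed.

Lemma density_window n th b :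
  RInt (ybar_density n th) (th - b) (th + b)
  = RInt gauss (- (sqrt (INR n) * b)) (sqrt (INR n) * b) / sqrt (2 * PI).
Proof.
  rewrite density_as_gauss, RInt_scal, RInt_subst by (auto using gauss_cont;
    apply continuity_integrable; unfold gauss; reg).
  replace (sqrt (INR n) * (th - b) + - sqrt (INR n) * th) with (- (sqrt (INR n) * b)) by ring.
  replace (sqrt (INR n) * (th + b) + - sqrt (INR n) * th) with (sqrt (INR n) * b) by ring.
  unfold Rdiv; ring.
Qed.

Lemma density_mass_le_1 n th p q : p <= q -> RInt (ybar_density n th) p q <= 1.
Proof.
  intros Hpq. set (b := Rabs p + Rabs q + Rabs th).
  assert (Hb : 0 <= b /\ th - b <= p /\ q <= th + b) by (unfold b; split_Rabs; lra).
  assert (Hwin : RInt (ybar_density n th) (th - b) (th + b) <= 1).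
  { rewrite density_window. pose proof PI_ge.
    assert (0 < sqrt (2 * PI)) by (apply sqrt_lt_R0; lra).
    assert (0 <= sqrt (INR n) * b) by (apply Rmult_le_pos; [apply sqrt_pos | lra]).
    pose proof (gauss_upper (sqrt (INR n) * b)).
    apply Rmult_le_reg_r with (sqrt (2 * PI)); auto. unfold Rdiv.
    rewrite Rmult_assoc, Rinv_l, Rmult_1_r by lra. lra. }
  assert (Hnn : forall u v, u <= v -> 0 <= RInt (ybar_density n th) u v).
  { intros u v Huv. apply RInt_pos; auto using continuity_integrable, density_cont.
    intros; apply density_nonneg. }
  rewrite <- (RInt_chasles _ (th - b) p (th + b)), <- (RInt_chasles _ p q (th + b))
    in Hwin by apply density_cont.
  pose proof (Hnn (th - b) p ltac:(lra)). pose proof (Hnn q (th + b) ltac:(lra)). lra.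
Qed.

Lemma density_mass_window n th b : (1 <= n)%nat -> 0 < b ->
  1 - 5 / (INR n * b ^ 2) <= RInt (ybar_density n th) (th - b) (th + b).
Proof.
  intros Hn Hb. rewrite density_window. pose proof PI_ge.
  assert (HS : 0 < sqrt (2 * PI)) by (apply sqrt_lt_R0; lra).
  assert (Hn' : 1 <= INR n) by (apply (le_INR 1); auto).
  assert (HK : 0 < sqrt (INR n) * b) by (apply Rmult_lt_0_compat; [apply sqrt_lt_R0 |]; lra).
  pose proof (gauss_lower _ HK) as HL.
  rewrite Rpow_mult_distr, pow2_sqrt in HL by lra.
  apply Rmult_le_reg_r with (sqrt (2 * PI)); auto. unfold Rdiv in *.
  rewrite Rmult_assoc, Rinv_l, Rmult_1_r by lra. lra.
Qed.

(** * Improper integrals of sub-densities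

    Let [0 <= h <= phi] with [phi] continuous of total mass at most [1].
    The window integrals [RInt h (-M) M] increase to a limit, which is
    [RInt_R h]; it is thus bounded below by any window integral and above
    by any eventual bound on them. *)

Section SubDensity.

Variables h phi : R -> R.
Hypothesis h_integrable : forall a b, Riemann_integrable h a b.
Hypothesis phi_cont : continuity phi.
Hypothesis h_between : forall y, 0 <= h y <= phi y.
Hypothesis phi_mass : forall p q, p <= q -> RInt phi p q <= 1.

Let window (M : nat) : R := RInt h (- INR M) (INR M).

Lemma h_RInt_nonneg a b : a <= b -> 0 <= RInt h a b.
Proof. intros Hab. apply RInt_pos; auto. intros; apply h_between. Qed.

Lemma h_RInt_le_phi a b : a <= b -> RInt h a b <= RInt phi a b.
Proof.
  intros Hab. apply RInt_le; auto using continuity_integrable. intros; apply h_between.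
Qed.

Lemma window_growing : Un_growing window.
Proof.
  intros M. unfold window.
  rewrite S_INR, (RInt_split3 h (- (INR M + 1)) (- INR M) (INR M) (INR M + 1)) by auto.
  pose proof (pos_INR M).
  pose proof (h_RInt_nonneg (- (INR M + 1)) (- INR M) ltac:(lra)).
  pose proof (h_RInt_nonneg (INR M) (INR M + 1) ltac:(lra)). lra.
Qed.

Lemma window_cv : Un_cv window (RInt_R h).
Proof.
  destruct (growing_cv window window_growing) as [l Hl].
  { exists 1. intros x [M ->]. pose proof (pos_INR M).
    eapply Rle_trans; [apply h_RInt_le_phi | apply phi_mass]; lra. }
  unfold RInt_R. apply (epsilon_spec (inhabits 0) (fun L => Un_cv window L)).
  now exists l.
Qed.

Lemma windows_exhaust p q : exists M0, forall M, (M0 <= M)%nat -> - INR M <= p /\ q <= INR M.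
Proof.
  destruct (INR_unbounded (Rabs p + Rabs q)) as [M0 HM0]. exists M0.
  intros M HM. apply le_INR in HM. split_Rabs; lra.
Qed.

Lemma RInt_R_ge p q : p <= q -> RInt h p q <= RInt_R h.
Proof.
  intros Hpq. destruct (windows_exhaust p q) as [M0 HM0].
  destruct (HM0 M0 (le_n _)) as [Ha Hb].
  apply Rle_trans with (window M0).
  - unfold window. rewrite (RInt_split3 h (- INR M0) p q (INR M0)) by auto.
    pose proof (h_RInt_nonneg _ _ Ha). pose proof (h_RInt_nonneg _ _ Hb). lra.
  - exact (growing_ineq window (RInt_R h) window_growing window_cv M0).
Qed.

Lemma RInt_R_ge_phi p q : p <= q -> (forall y, p <= y <= q -> h y = phi y) ->
  RInt phi p q <= RInt_R h.
Proof.
  intros Hpq Heq. rewrite <- (RInt_ext h phi p q); auto using continuity_integrable.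
  - now apply RInt_R_ge.
  - intros; apply Heq; lra.
Qed.

Lemma RInt_R_le B M0 : (forall M, (M0 <= M)%nat -> window M <= B) -> RInt_R h <= B.
Proof.
  intros Hbound.
  apply Rle_cv_lim with (Un := window) (Vn := fun _ => B); [| exact window_cv |].
  - intros M. eapply Rle_trans; [| apply (Hbound (max M M0)); lia].
    apply tech9; [exact window_growing | lia].
  - intros e He. exists 0%nat. intros. unfold Rdist. rewrite Rminus_diag, Rabs_R0. lra.
Qed.

Lemma RInt_R_unit_interval : 0 <= RInt_R h <= 1.
Proof.
  split.
  - rewrite <- (RInt_aa h 0). apply RInt_R_ge; lra.
  - apply (RInt_R_le 1 0). intros M _. pose proof (pos_INR M).
    eapply Rle_trans; [apply h_RInt_le_phi | apply phi_mass]; lra.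
Qed.

Lemma RInt_R_le_complement p q : p <= q -> (forall y, p <= y <= q -> h y = 0) ->
  RInt_R h <= 1 - RInt phi p q.
Proof.
  intros Hpq Heq. destruct (windows_exhaust p q) as [M0 HM0].
  apply (RInt_R_le _ M0). intros M HM. destruct (HM0 M HM) as [Ha Hb]. unfold window.
  rewrite (RInt_split3 h (- INR M) p q (INR M)), (RInt_ext h (fun _ => 0) p q),
    RInt_const; auto; [| intros; apply Heq; lra | apply RiemannInt_P14].
  pose proof (phi_mass (- INR M) (INR M) ltac:(lra)) as Hmass.
  rewrite (RInt_split3 phi (- INR M) p q (INR M)) in Hmass
    by auto using continuity_integrable.
  pose proof (h_RInt_le_phi _ _ Ha). pose proof (h_RInt_le_phi _ _ Hb). lra.
Qed.

End SubDensity.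

(** * Integrability of truncated densities

    The integrand defining [G_A] is a continuous density multiplied by the
    indicator of a set which, [thetaA] being nondecreasing, is a down-set of
    [R].  Such a product is continuous except at one jump, hence integrable. *)

Lemma integrable_open_ext f g a b : a <= b -> (forall x, a < x < b -> f x = g x) ->
  Riemann_integrable f a b -> Riemann_integrable g a b.
Proof.
  intros Hab H pf.
  assert (Hstep : IsStepFun (fun x => g x - f x) a b).
  { exists (cons a (cons b nil)), (cons 0 nil).
    unfold adapted_couple; repeat split.
    - intros i Hi; simpl in Hi. inversion Hi; [simpl; lra | lia].
    - simpl; unfold Rmin; destruct (Rle_dec a b); lra.
    - simpl; unfold Rmax; destruct (Rle_dec a b); lra.
    - intros i Hi x Hx; simpl in Hi. inversion Hi as [Hi0 | ]; [| lia].
      subst i; simpl in Hx. unfold open_interval in Hx. rewrite (H x Hx); simpl; ring. }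
  assert (pd : Riemann_integrable (fun x => g x - f x) a b).
  { intros eps. exists (mkStepFun Hstep), (mkStepFun (StepFun_P4 a b 0)). split.
    - intros t _. simpl. rewrite Rminus_diag, Rabs_R0. unfold fct_cte; lra.
    - rewrite StepFun_P18, Rmult_0_l, Rabs_R0. apply cond_pos. }
  apply Riemann_integrable_ext with (fun x => f x + 1 * (g x - f x));
    [intros; ring | now apply RiemannInt_P10].
Qed.

Lemma integrable_glue f g1 g2 a b c : a <= b ->
  (forall y, a < y < b -> y < c -> f y = g1 y) ->
  (forall y, a < y < b -> c < y -> f y = g2 y) ->
  Riemann_integrable g1 a b -> Riemann_integrable g2 a b -> Riemann_integrable f a b.
Proof.
  intros Hab H1 H2 p1 p2.
  destruct (Rle_dec c a).
  { apply integrable_open_ext with g2; auto. intros; symmetry; apply H2; lra. }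
  destruct (Rle_dec b c).
  { apply integrable_open_ext with g1; auto. intros; symmetry; apply H1; lra. }
  apply RiemannInt_P21 with c; [lra | lra | |].
  - apply integrable_open_ext with g1; [lra | intros; symmetry; apply H1; lra |].
    apply RiemannInt_P22 with b; auto; lra.
  - apply integrable_open_ext with g2; [lra | intros; symmetry; apply H2; lra |].
    apply RiemannInt_P23 with a; auto; lra.
Qed.

Lemma downset_integrable (P : R -> Prop) (Pdec : forall y, {P y} + {~ P y}) phi :
  continuity phi -> (forall y y', y' <= y -> P y -> P y') ->
  forall a b, Riemann_integrable (fun y => (if Pdec y then 1 else 0) * phi y) a b.
Proof.
  intros Hphi Hdown.
  assert (Hle : forall a b, a <= b ->
            Riemann_integrable (fun y => (if Pdec y then 1 else 0) * phi y) a b).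
  { intros a b Hab.
    (* [c] is the right end of the down-set [P], clipped to [[a, b]]. *)
    set (E := fun y => y <= b /\ (y <= a \/ P y)).
    destruct (completeness E) as [c [Hub Hleast]].
    { exists b. intros y [Hy _]. exact Hy. }
    { exists a. split; [lra | now left]. }
    apply integrable_glue with phi (fun _ => 0) c; auto using continuity_integrable.
    - intros y Hy Hyc. destruct (Pdec y) as [| HnP]; [ring | exfalso].
      assert (Hyub : is_upper_bound E y).
      { intros y' [Hy'b [Hy'a | HPy']]; [lra |].
        destruct (Rle_dec y' y); auto. exfalso. apply HnP, (Hdown y'); auto; lra. }
      specialize (Hleast y Hyub). lra.
    - intros y Hy Hyc. destruct (Pdec y) as [HP |]; [exfalso | ring].
      assert (HEy : E y) by (split; [lra | now right]).
      specialize (Hub y HEy). lra.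
    - apply RiemannInt_P14. }
  intros a b. destruct (Rle_dec a b); [now apply Hle |].
  apply RiemannInt_P1, Hle. lra.
Qed.

(** * Bounds on [G_A]

    [thetaA mu] is nondecreasing: it vanishes on [[-mu, mu]] and
    [y |-> y - mu^2/y] increases on each half-line beyond. *)

Lemma thetaA_outer_sign mu y : 0 < mu -> ~ Rabs y <= mu ->
  (mu < y /\ 0 <= y - mu ^ 2 / y) \/ (y < - mu /\ y - mu ^ 2 / y <= 0).
Proof.
  intros Hmu Hy. destruct (Rle_dec 0 y); [left | right].
  - rewrite Rabs_pos_eq in Hy by lra.
    assert (0 < / y) by (apply Rinv_0_lt_compat; lra).
    replace (y - mu ^ 2 / y) with ((y - mu) * (y + mu) * / y) by (field; lra).
    split; [lra |]. apply Rmult_le_pos; nra.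
  - rewrite Rabs_left in Hy by lra.
    assert (0 < / - y) by (apply Rinv_0_lt_compat; lra).
    replace (y - mu ^ 2 / y) with (- ((y - mu) * (y + mu) * / - y)) by (field; lra).
    split; [lra |]. assert (0 <= (y - mu) * (y + mu) * / - y) by (apply Rmult_le_pos; nra).
    lra.
Qed.

Lemma thetaA_mono mu y1 y2 : 0 < mu -> y1 <= y2 -> thetaA mu y1 <= thetaA mu y2.
Proof.
  intros Hmu H12. unfold thetaA.
  destruct (Rle_dec (Rabs y1) mu) as [H1 | H1], (Rle_dec (Rabs y2) mu) as [H2 | H2].
  - lra.
  - destruct (thetaA_outer_sign mu y2 Hmu H2) as [[? ?] | [? ?]]; [lra | split_Rabs; lra].
  - destruct (thetaA_outer_sign mu y1 Hmu H1) as [[? ?] | [? ?]]; [split_Rabs; lra | lra].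
  - destruct (thetaA_outer_sign mu y1 Hmu H1) as [[Hy1 S1] | [Hy1 S1]],
      (thetaA_outer_sign mu y2 Hmu H2) as [[Hy2 S2] | [Hy2 S2]]; try lra.
    all: assert (Hpos : 0 < mu ^ 2 / (y1 * y2)) by (apply Rdiv_lt_0_compat; nra).
    all: replace (y2 - mu ^ 2 / y2) with (y1 - mu ^ 2 / y1 + (y2 - y1) * (1 + mu ^ 2 / (y1 * y2)))
           by (field; split; lra).
    all: assert (0 <= (y2 - y1) * (1 + mu ^ 2 / (y1 * y2))) by (apply Rmult_le_pos; lra).
    all: lra.
Qed.

Definition G_integrand (mu : R) (n : nat) (th x : R) (y : R) : R :=
  (if Rle_dec ((thetaA mu y - th) / mu) x then 1 else 0) * ybar_density n th y.

Lemma G_integrand_integrable mu n th x : 0 < mu ->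
  forall a b, Riemann_integrable (G_integrand mu n th x) a b.
Proof.
  intros Hmu. apply (downset_integrable (fun y => (thetaA mu y - th) / mu <= x)
    (fun y => Rle_dec ((thetaA mu y - th) / mu) x)); [apply density_cont |].
  intros y y' Hy' Hy. eapply Rle_trans; [| exact Hy]. unfold Rdiv.
  apply Rmult_le_compat_r; [left; now apply Rinv_0_lt_compat |].
  pose proof (thetaA_mono mu y' y Hmu Hy'). lra.
Qed.

Lemma G_integrand_between mu n th x y :
  0 <= G_integrand mu n th x y <= ybar_density n th y.
Proof.
  unfold G_integrand. pose proof (density_nonneg n th y).
  destruct (Rle_dec _ x); lra.
Qed.

Lemma G_A_unit_interval mu n th x : 0 < mu -> 0 <= G_A mu n th x <= 1.
Proof.
  intros Hmu. apply (RInt_R_unit_interval (G_integrand mu n th x) (ybar_density n th));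
    auto using G_integrand_integrable, density_cont, G_integrand_between, density_mass_le_1.
Qed.

Lemma G_A_lower mu n th x b : 0 < mu -> (1 <= n)%nat -> 0 < b ->
  (forall y, th - b <= y <= th + b -> (thetaA mu y - th) / mu <= x) ->
  1 - 5 / (INR n * b ^ 2) <= G_A mu n th x.
Proof.
  intros Hmu Hn Hb Hwin. eapply Rle_trans; [now apply density_mass_window |].
  apply (RInt_R_ge_phi (G_integrand mu n th x) (ybar_density n th));
    auto using G_integrand_integrable, density_cont, G_integrand_between,
    density_mass_le_1; [lra |].
  intros y Hy. unfold G_integrand. destruct (Rle_dec _ x) as [| Hn']; [ring |].
  exfalso; now apply Hn', Hwin.
Qed.

Lemma G_A_upper mu n th x b : 0 < mu -> (1 <= n)%nat -> 0 < b ->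
  (forall y, th - b <= y <= th + b -> x < (thetaA mu y - th) / mu) ->
  G_A mu n th x <= 5 / (INR n * b ^ 2).
Proof.
  intros Hmu Hn Hb Hwin. pose proof (density_mass_window n th b Hn Hb).
  enough (G_A mu n th x <= 1 - RInt (ybar_density n th) (th - b) (th + b)) by lra.
  apply (RInt_R_le_complement (G_integrand mu n th x) (ybar_density n th));
    auto using G_integrand_integrable, density_cont, G_integrand_between,
    density_mass_le_1; [lra |].
  intros y Hy. unfold G_integrand. destruct (Rle_dec _ x) as [Hc |]; [| ring].
  exfalso. specialize (Hwin y Hy). lra.
Qed.

(** * The rescaled estimator *)

Definition rescaled (w t : R) : R :=
  if Rle_dec (Rabs (w + t)) 1 then - w else t - / (w + t).

Lemma rescaled_spec mu th y : 0 < mu ->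
  (thetaA mu y - th) / mu = rescaled (th / mu) ((y - th) / mu).
Proof.
  intros Hmu. unfold thetaA, rescaled.
  replace (th / mu + (y - th) / mu) with (y / mu) by (field; lra).
  assert (Hiff : Rabs y <= mu <-> Rabs (y / mu) <= 1).
  { unfold Rdiv. rewrite Rabs_mult, Rabs_inv, (Rabs_pos_eq mu) by lra.
    split; intros H.
    - apply Rmult_le_reg_r with mu; [lra |]. rewrite Rmult_assoc, Rinv_l; lra.
    - apply Rmult_le_compat_r with (r := mu) in H; [| lra].
      rewrite Rmult_assoc, Rinv_l in H; lra. }
  destruct (Rle_dec (Rabs y) mu) as [H1 | H1], (Rle_dec (Rabs (y / mu)) 1) as [H2 | H2];
    try tauto.
  - field; lra.
  - assert (y <> 0) by (intros ->; rewrite Rabs_R0 in H1; lra).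
    field; split; lra.
Qed.

Lemma rescaled_opp w t : rescaled (- w) (- t) = - rescaled w t.
Proof.
  unfold rescaled. replace (- w + - t) with (- (w + t)) by ring. rewrite Rabs_Ropp.
  destruct (Rle_dec (Rabs (w + t)) 1) as [| Hgt]; [ring |].
  assert (w + t <> 0) by (intros Heq; rewrite Heq, Rabs_R0 in Hgt; lra).
  field; auto.
Qed.

Lemma rescaled_near_inv z w t r : 1 <= z -> 0 < r <= 1 / 2 ->
  Rabs (w - z) < r / 2 -> Rabs t <= r / 2 -> Rabs (rescaled w t + / z) <= 3 * r.
Proof.
  intros Hz Hr Hw Ht.
  assert (Hiz : 0 < / z <= 1)
    by (split; [apply Rinv_0_lt_compat; lra | rewrite <- Rinv_1; apply Rinv_le_contravar; lra]).
  assert (Hzz : z * / z = 1) by (field; lra).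
  unfold rescaled. destruct (Rle_dec (Rabs (w + t)) 1) as [Hv | Hv].
  - assert (z <= 1 + r) by (split_Rabs; lra).
    assert (1 - r <= / z) by nra.
    apply Rabs_le. split_Rabs; lra.
  - assert (Hv' : 1 < w + t) by (split_Rabs; lra).
    assert (Hiv : 0 < / (w + t) <= 1)
      by (split; [apply Rinv_0_lt_compat; lra | rewrite <- Rinv_1; apply Rinv_le_contravar; lra]).
    replace (t - / (w + t) + / z) with (t + (w + t - z) * / (w + t) * / z) by (field; lra).
    assert (Rabs ((w + t - z) * / (w + t) * / z) <= r).
    { rewrite !Rabs_mult, (Rabs_pos_eq (/ (w + t))), (Rabs_pos_eq (/ z)) by lra.
      assert (Rabs (w + t - z) <= r) by (split_Rabs; lra).
      pose proof (Rabs_pos (w + t - z)).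
      assert (Rabs (w + t - z) * / (w + t) <= r) by nra. nra. }
    pose proof (Rabs_triang t ((w + t - z) * / (w + t) * / z)). lra.
Qed.

Lemma rescaled_at_infinity w t e : 0 < e -> Rabs t <= Rmin 1 (e / 2) -> 3 + 2 / e <= w ->
  Rabs (rescaled w t) <= e.
Proof.
  intros He Ht Hw.
  assert (Ht1 : Rabs t <= 1) by (eapply Rle_trans; [exact Ht | apply Rmin_l]).
  assert (Ht2 : Rabs t <= e / 2) by (eapply Rle_trans; [exact Ht | apply Rmin_r]).
  assert (Hpe : 0 < 2 / e) by (apply Rdiv_lt_0_compat; lra).
  unfold rescaled. destruct (Rle_dec (Rabs (w + t)) 1) as [Hv | Hv]; [split_Rabs; lra |].
  assert (Hi : 0 < / (w + t) <= e / 2).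
  { split; [apply Rinv_0_lt_compat; split_Rabs; lra |].
    replace (e / 2) with (/ (2 / e)) by (field; lra).
    apply Rinv_le_contravar; [lra | split_Rabs; lra]. }
  apply Rabs_le. split_Rabs; lra.
Qed.

Definition concentrates (w : nat -> R) (c : R) : Prop :=
  forall eta, 0 < eta -> exists eps, 0 < eps /\
    exists N, forall n, (N <= n)%nat -> forall t, Rabs t <= eps ->
      Rabs (rescaled (w n) t - c) <= eta.

(** Case [|zeta| < 1]: the estimator is eventually [0], i.e. [rescaled = -w]. *)
Lemma concentrates_inside w z : Rabs z < 1 -> Un_cv w z -> concentrates w (- z).
Proof.
  intros Hz Hl eta Heta.
  assert (Hd : 0 < Rmin eta ((1 - Rabs z) / 2)) by (apply Rmin_pos; lra).
  exists ((1 - Rabs z) / 2). split; [lra |].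
  destruct (Hl _ Hd) as [N HN]. exists N. intros n Hn t Ht.
  specialize (HN n Hn). unfold Rdist in HN.
  assert (H1 : Rabs (w n - z) < eta) by (eapply Rlt_le_trans; [exact HN | apply Rmin_l]).
  assert (H2 : Rabs (w n - z) < (1 - Rabs z) / 2)
    by (eapply Rlt_le_trans; [exact HN | apply Rmin_r]).
  unfold rescaled. destruct (Rle_dec (Rabs (w n + t)) 1) as [| Hv]; [split_Rabs; lra |].
  exfalso. apply Hv. split_Rabs; lra.
Qed.

Lemma concentrates_boundary w z : 1 <= Rabs z -> Un_cv w z -> concentrates w (- / z).
Proof.
  intros Hz Hl eta Heta.
  set (r := Rmin (eta / 3) (1 / 2)).
  assert (Hr : 0 < r <= 1 / 2) by (split; [apply Rmin_pos; lra | apply Rmin_r]).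
  assert (Hr3 : 3 * r <= eta) by (assert (r <= eta / 3) by apply Rmin_l; lra).
  exists (r / 2). split; [lra |].
  destruct (Hl (r / 2)) as [N HN]; [lra |]. exists N. intros n Hn t Ht.
  specialize (HN n Hn). unfold Rdist in HN.
  destruct (Rle_dec 0 z).
  - rewrite Rabs_pos_eq in Hz by auto.
    replace (rescaled (w n) t - - / z) with (rescaled (w n) t + / z) by ring.
    pose proof (rescaled_near_inv z (w n) t r Hz Hr HN Ht). lra.
  - rewrite Rabs_left in Hz by lra.
    assert (HN' : Rabs (- w n - - z) < r / 2)
      by (replace (- w n - - z) with (- (w n - z)) by ring; now rewrite Rabs_Ropp).
    assert (Ht' : Rabs (- t) <= r / 2) by now rewrite Rabs_Ropp.
    pose proof (rescaled_near_inv (- z) (- w n) (- t) r Hz Hr HN' Ht') as HB.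
    rewrite rescaled_opp in HB.
    replace (rescaled (w n) t - - / z) with (- (- rescaled (w n) t + / - z)) by (field; lra).
    rewrite Rabs_Ropp. lra.
Qed.

Lemma concentrates_infinite w : (cv_infty w \/ cv_infty (fun n => - w n)) -> concentrates w 0.
Proof.
  intros Hw eta Heta. exists (Rmin 1 (eta / 2)). split; [apply Rmin_pos; lra |].
  destruct Hw as [Hw | Hw]; destruct (Hw (3 + 2 / eta)) as [N HN]; exists N;
    intros n Hn t Ht; specialize (HN n Hn); rewrite Rminus_0_r.
  - apply rescaled_at_infinity; auto. lra.
  - rewrite <- Rabs_Ropp, <- rescaled_opp.
    apply rescaled_at_infinity; [auto | now rewrite Rabs_Ropp | lra].
Qed.

Lemma step_continuity_pt c x : continuity_pt (step c) x -> x <> c.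
Proof.
  intros H ->. destruct (H (1 / 2)) as [alp [Ha Hal]]; [lra |].
  specialize (Hal (c - alp / 2)). simpl in Hal. unfold Rdist, step in Hal.
  destruct (Rle_dec c (c - alp / 2)); [lra |]. destruct (Rle_dec c c); [| lra].
  assert (Rabs (0 - 1) < 1 / 2); [| split_Rabs; lra].
  apply Hal. split; [split; [constructor | lra] |].
  replace (c - alp / 2 - c) with (- (alp / 2)) by ring.
  rewrite Rabs_Ropp, Rabs_pos_eq; lra.
Qed.

Lemma window_tail_small (mu : nat -> R) ep eps : 0 < ep -> 0 < eps ->
  cv_infty (fun n => sqrt (INR n) * mu n) ->
  exists N, forall n, (N <= n)%nat -> (1 <= n)%nat /\ 5 / (INR n * (ep * mu n) ^ 2) < eps.
Proof.
  intros Hep Heps Hinf.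
  set (K := 5 / (ep ^ 2 * eps) + 1).
  assert (HK0 : 0 < 5 / (ep ^ 2 * eps))
    by (apply Rdiv_lt_0_compat; [lra | apply Rmult_lt_0_compat; [apply pow_lt |]; lra]).
  destruct (Hinf K) as [N HN]. exists (max N 1). intros n Hn. split; [lia |].
  specialize (HN n ltac:(lia)). set (s := sqrt (INR n) * mu n) in *.
  assert (Hs : INR n * (ep * mu n) ^ 2 = ep ^ 2 * (s * s)).
  { unfold s. rewrite <- (sqrt_sqrt (INR n)) at 1 by apply pos_INR. ring. }
  assert (Hep2 : 0 < ep ^ 2) by (apply pow_lt; lra).
  assert (HKs : K < s * s) by (unfold K in *; nra).
  rewrite Hs. apply Rmult_lt_reg_r with (ep ^ 2 * (s * s)); [unfold K in *; nra |].
  unfold Rdiv. rewrite Rmult_assoc, Rinv_l, Rmult_1_r by (unfold K in *; nra).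
  assert (HK1 : 5 / (ep ^ 2 * eps) * (ep ^ 2 * eps) = 5) by (field; lra).
  unfold K in HKs. nra.
Qed.

Lemma weak_conv_of_concentrates (mu theta : nat -> R) c :
  (forall n, 0 < mu n) -> cv_infty (fun n => sqrt (INR n) * mu n) ->
  concentrates (fun n => theta n / mu n) c ->
  weak_conv (fun n => G_A (mu n) n (theta n)) (step c).
Proof.
  intros Hpos Hinf Hconc x Hcx eps Heps.
  assert (Hxc : 0 < Rabs (x - c)) by (apply Rabs_pos_lt; apply step_continuity_pt in Hcx; lra).
  destruct (Hconc (Rabs (x - c) / 2)) as [ep [Hep [N1 HN1]]]; [lra |].
  destruct (window_tail_small mu ep eps Hep Heps Hinf) as [N2 HN2].
  exists (max N1 N2). intros n Hn.
  destruct (HN2 n ltac:(lia)) as [Hn1 Htail].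
  assert (Hm : 0 < mu n) by apply Hpos.
  assert (Hb : 0 < ep * mu n) by nra.
  assert (Hwin : forall y, theta n - ep * mu n <= y <= theta n + ep * mu n ->
            Rabs ((thetaA (mu n) y - theta n) / mu n - c) <= Rabs (x - c) / 2).
  { intros y Hy. rewrite rescaled_spec by auto. apply HN1; [lia |].
    apply Rabs_le. split; apply Rmult_le_reg_r with (mu n); auto; unfold Rdiv;
      rewrite Rmult_assoc, Rinv_l by lra; lra. }
  pose proof (G_A_unit_interval (mu n) n (theta n) x Hm).
  unfold Rdist, step. destruct (Rle_dec c x).
  - assert (1 - 5 / (INR n * (ep * mu n) ^ 2) <= G_A (mu n) n (theta n) x).
    { apply G_A_lower; auto. intros y Hy. specialize (Hwin y Hy). split_Rabs; lra. }
    split_Rabs; lra.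
  - assert (G_A (mu n) n (theta n) x <= 5 / (INR n * (ep * mu n) ^ 2)).
    { apply G_A_upper; auto. intros y Hy. specialize (Hwin y Hy). split_Rabs; lra. }
    split_Rabs; lra.
Qed.

Theorem theorem4 (mu theta : nat -> R) (zeta : ereal)
  (Hpos : forall n, 0 < mu n)
  (Hmu0 : Un_cv mu 0)
  (Hmuinf : cv_infty (fun n => sqrt (INR n) * mu n))
  (Hzeta : cv_ereal (fun n => theta n / mu n) zeta) :
  (forall z, zeta = Fin z -> Rabs z < 1 ->
     weak_conv (fun n => G_A (mu n) n (theta n)) (step (- z))) /\
  (forall z, zeta = Fin z -> 1 <= Rabs z ->
     weak_conv (fun n => G_A (mu n) n (theta n)) (step (- / z))) /\
  ((zeta = PInf \/ zeta = MInf) ->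
     weak_conv (fun n => G_A (mu n) n (theta n)) (step 0)).
Proof.
  split; [| split].
  - intros z -> Hz. apply weak_conv_of_concentrates; auto.
    now apply concentrates_inside.
  - intros z -> Hz. apply weak_conv_of_concentrates; auto.
    now apply concentrates_boundary.
  - intros [-> | ->]; apply weak_conv_of_concentrates, concentrates_infinite; auto.
Qed.
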